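(* Let $H$ be a digraph (possibly with loops) and let $D$ be an $H$-colored $3$-quasi-transitive digraph. For every $k \geq 5$, $D$ has a $(k,H)$-kernel.
   Context: All digraphs are finite. A digraph $D$ is $3$-quasi-transitive if for all distinct $u,v\in V(D)$, whenever there is a directed $uv$-path of length $3$, $u$ and $v$ are joined by an arc (in some direction). $D$ has no loops and comes with a map $\rho: A(D)\to V(H)$. For a walk $W=(x_0,\ldots,x_n)$ in $D$, there is an obstruction on $x_i$ if $(\rho(x_{i-1},x_i),\rho(x_i,x_{i+1})) \notin A(H)$; for an open walk this is considered at internal vertices $x_i$, $1\le i\le n-1$, for a closed walk at all $i\in\{0,\ldots,n-1\}$ with indices modulo $n$. $O_H(W)$ is the set of indices with an obstruction; the $H$-length is $l_H(W)=|O_H(W)|+1$ for open $W$ and $|O_H(W)|$ for closed $W$. A $(k,H)$-kernel ($k\ge2$) is a set $S\subseteq V(D)$ such that for every two distinct $u,v\in S$ every directed $uv$-path in $D$ has $H$-length at least $k$, and for every $x\in V(D)\setminus S$ there is a directed path from $x$ to a vertex of $S$ of $H$-length at most $k-1$. *)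

From mathcomp Require Import all_boot.
Set Implicit Arguments. Unset Strict Implicit. Unset Printing Implicit Defensive.

Section HColored.
Variables (V C : finType) (E : rel V) (HA : rel C) (rho : V -> V -> C).

(* A directed uv-path: the vertex sequence u :: p, consecutive vertices joined
   by arcs of D, no repeated vertex, ending at v.  Its length is size p. *)
Definition dpath (u v : V) (p : seq V) : bool :=
  [&& path E u p, last u p == v & uniq (u :: p)].

Definition three_quasi_transitive : Prop :=
  forall u v (p : seq V), u != v -> dpath u v p -> size p = 3 -> E u v || E v u.

Fixpoint obstructions (s : seq V) : nat :=
  match s with
  | x :: ((y :: (z :: _)) as t) => (~~ HA (rho x y) (rho y z)) + obstructions t
  | _ => 0
  end.

Definition Hlength (s : seq V) : nat := obstructions s + 1.

Definition kH_kernel (k : nat) (S : {set V}) : Prop :=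
  (forall u v (p : seq V), u \in S -> v \in S -> u != v ->
      dpath u v p -> k <= Hlength (u :: p))
  /\ (forall x, x \notin S -> exists v (p : seq V),
      [/\ v \in S, dpath x v p & Hlength (x :: p) <= k - 1]).

End HColored.

(* Write x ~> y when some directed xy-path has H-length at most k - 1.  A
   (k,H)-kernel is exactly an independent set absorbing every other vertex
   along ~>, and such a set exists as soon as the asymmetric part of ~> is
   acyclic: repeatedly keep a vertex with no asymmetric out-arc and discard
   every vertex ~>-reaching it.
   An open walk of length n >= 1 has H-length at most n, so two vertices at
   distance at most 4 <= k - 1 are ~>-related, and an asymmetric arc x ~> y
   forces d(y, x) > 4.  In a 3-quasi-transitive digraph a geodesic of odd
   length at least 3 is closed by a backward arc; this keeps every vertex
   reached from x along asymmetric ~>-arcs within distance 2 of x, so no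
   asymmetric cycle returns to x. *)
From mathcomp Require Import all_boot zify boolp.

Set Implicit Arguments. Unset Strict Implicit. Unset Printing Implicit Defensive.

Section AcyclicAsymmetricPart.
Variables (T : finType) (r : rel T).

Definition asym_part : rel T := fun x y => r x y && ~~ r y x.

Definition kernel_in (U S : {set T}) : Prop :=
  [/\ S \subset U, {in S &, forall u v, u != v -> ~~ r u v}
    & forall x, x \in U -> x \notin S -> exists2 v, v \in S & r x v].

Hypothesis asym_acyclic : forall x y, asym_part x y -> ~~ connect asym_part y x.

Lemma exists_asym_sink (U : {set T}) x0 :
  x0 \in U -> exists2 x, x \in U & {in U, forall y, ~~ asym_part x y}.
Proof.
move=> x0U; pose reach x := [set z | connect asym_part x z].
case: (arg_minnP (fun x => #|reach x|) x0U) => x xU x_min.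
exists x => // y yU; apply/negP => xy.
have := x_min y yU; apply/negP; rewrite -ltnNge; apply: proper_card.
apply/properP; split.
  by apply/subsetP => z; rewrite !inE; apply: connect_trans (connect1 xy).
by exists x; rewrite !inE ?connect0 // asym_acyclic.
Qed.

Lemma exists_kernel_in (U : {set T}) : exists S, kernel_in U S.
Proof.
have [n] := ubnP #|U|; elim: n U => // n IH U /ltnSE-card_U.
have [->|[x0 x0U]] := set_0Vmem U.
  by exists set0; split=> [|u v|y]; rewrite ?sub0set ?inE.
have [x xU x_sink] := exists_asym_sink x0U.
pose U' := [set y in U | (y != x) && ~~ r y x].
have U'U : U' \subset U by apply/subsetP => y; rewrite inE => /andP[].
have [|S [SU' indS absS]] := IH U'.
  apply: leq_trans card_U; apply/proper_card/properP; split=> //.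
  by exists x; rewrite // inE eqxx andbF.
exists (x |: S); split.
- by rewrite subUset sub1set xU (subset_trans SU' U'U).
- have [S_U S_x] : {subset S <= U} /\ {in S, forall v, ~~ r v x}.
    by split=> v /(subsetP SU'); rewrite inE => /and3P[].
  move=> u v; rewrite !in_setU1 => /predU1P[->|uS] /predU1P[->|vS] uv.
  + by rewrite eqxx in uv.
  + by have := x_sink v (S_U v vS); rewrite /asym_part S_x // andbT.
  + exact: S_x.
  + exact: indS.
- move=> y yU; rewrite in_setU1 negb_or => /andP[yx yS].
  have [yx_r|not_yx_r] := boolP (r y x); first by exists x; rewrite ?setU11.
  have [|v vS yv] := absS y _ yS; first by rewrite inE yU yx.
  by exists v; rewrite ?setU1r.
Qed.

End AcyclicAsymmetricPart.

Section Geodesics.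
Variables (V : finType) (E : rel V).

Definition dist_le n x y :=
  exists p, [/\ path E x p, last x p = y & size p <= n].

Definition geodesic x y p :=
  [/\ path E x p, last x p = y
    & forall q, path E x q -> last x q = y -> size p <= size q].

Lemma dist_le_cat m n x y z :
  dist_le m x y -> dist_le n y z -> dist_le (m + n) x z.
Proof.
case=> [p [Ep xp mp]] [q [Eq yq nq]]; exists (p ++ q).
by rewrite cat_path last_cat Ep xp Eq yq size_cat leq_add.
Qed.

Lemma dist_le_arc x y : E x y -> dist_le 1 x y.
Proof. by exists [:: y]; rewrite /= andbT. Qed.

Lemma dist_le_widen m n x y : m <= n -> dist_le m x y -> dist_le n x y.
Proof.
by move=> mn [p [Ep xp mp]]; exists p; split=> //; apply: leq_trans mn.
Qed.

Lemma dist_le_connect n x y : dist_le n x y -> connect E x y.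
Proof. by case=> p [Ep <- _]; apply/connectP; exists p. Qed.

Lemma geodesic_size_le n x y p : geodesic x y p -> dist_le n x y -> size p <= n.
Proof.
by case=> _ _ p_min [q [Eq xq nq]]; apply: leq_trans (p_min q Eq xq) nq.
Qed.

Lemma geodesic_neq x y p : geodesic x y p -> 0 < size p -> x != y.
Proof.
move=> g; apply: contraTneq => xy; rewrite -leqNgt.
by apply: geodesic_size_le g _; exists [::]; rewrite xy.
Qed.

Lemma exists_geodesic x y : connect E x y -> exists p, geodesic x y p.
Proof.
case/connectP=> p0 Ep0 ->.
have : exists n, [exists p : n.-tuple V, path E x p && (last x p == last x p0)].
  by exists (size p0); apply/existsP; exists (in_tuple p0); rewrite Ep0 eqxx.
case/ex_minnP=> n /existsP[p /andP[Ep /eqP xp]] n_min.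
exists p; split=> // q Eq xq; rewrite size_tuple; apply: n_min.
by apply/existsP; exists (in_tuple q); rewrite Eq xq eqxx.
Qed.

Lemma geodesic_cat x y p1 p2 : geodesic x y (p1 ++ p2) ->
  geodesic x (last x p1) p1 /\ geodesic (last x p1) y p2.
Proof.
case; rewrite cat_path last_cat => /andP[Ep1 Ep2] xy p_min; split; split=> //.
- move=> q Eq xq; have := p_min (q ++ p2).
  by rewrite cat_path last_cat Eq xq Ep2 !size_cat leq_add2r; apply.
- move=> q Eq xq; have := p_min (p1 ++ q).
  by rewrite cat_path last_cat Ep1 Eq xq !size_cat leq_add2l; apply.
Qed.

End Geodesics.

Section ThreeQuasiTransitive.
Variables (V : finType) (E : rel V).
Hypotheses (E_irr : irreflexive E) (E_qt : three_quasi_transitive E).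

Lemma qt_adjacent a b c d : E a b -> E b c -> E c d ->
  a != c -> a != d -> b != d -> E a d || E d a.
Proof.
move=> ab bc cd ac ad bd.
have neq_arc u v : E u v -> u != v by apply: contraTneq => ->; rewrite E_irr.
apply: (E_qt (p := [:: b; c; d])) => //.
by rewrite /dpath /= ab bc cd !inE !negb_or ac ad bd eqxx !neq_arc.
Qed.

Lemma geodesic3_back_arc x a b c : geodesic E x c [:: a; b; c] -> E c x.
Proof.
move=> g; have [/and4P[xa ab bc _] _ _] := g.
have [g_xb _] := geodesic_cat (p1 := [:: a; b]) g.
have [_ g_ac] := geodesic_cat (p1 := [:: a]) g.
have := qt_adjacent xa ab bc (geodesic_neq g_xb isT) (geodesic_neq g isT)
  (geodesic_neq g_ac isT).
by case/orP=> // xc; have := geodesic_size_le g (dist_le_arc xc).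
Qed.

Lemma geodesic_odd_back_arc x y p :
  geodesic E x y p -> odd (size p) -> 3 <= size p -> E y x.
Proof.
have [n] := ubnP (size p); elim: n x y p => // n IH x y.
case=> [|a [|b [|c [|d p]]]] //= /ltnSE-size_p g odd_p _.
  have /= c_y : last x [:: a; b; c] = y by case: g.
  by rewrite -c_y in g *; apply: geodesic3_back_arc g.
have [g_xc g_cy] := geodesic_cat (p1 := [:: a; b; c]) g.
have [g_xb g_by] := geodesic_cat (p1 := [:: a; b]) g.
have [/and4P[_ _ bc _] _ _] := g.
rewrite !negbK in odd_p; have p_gt0 := odd_gt0 odd_p.
have yb : E y b by apply: (IH _ _ _ _ g_by) => /=; rewrite ?negbK //; lia.
have := qt_adjacent yb bc (geodesic3_back_arc g_xc).
rewrite eq_sym (geodesic_neq g_cy) // eq_sym (geodesic_neq g) //.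
rewrite eq_sym (geodesic_neq g_xb) //.
move=> /(_ isT isT isT)/orP[//|xy].
by have := geodesic_size_le g (dist_le_arc xy).
Qed.

Lemma geodesic_back_dist2 x y p :
  geodesic E x y p -> 3 <= size p -> size p != 4 -> dist_le E 2 y x.
Proof.
move=> g ge3 ne4; have [odd_p|even_p] := boolP (odd (size p)).
  exact: dist_le_widen (dist_le_arc (geodesic_odd_back_arc g odd_p ge3)).
case: p => [|a [|b [|c p]]] //= in g ge3 ne4 even_p *.
have [g_xc g_cy] := geodesic_cat (p1 := [:: a; b; c]) g.
rewrite !negbK in even_p; have p_ge3 : 3 <= size p.
  by have := odd_gt0 even_p; lia.
have yc := geodesic_odd_back_arc g_cy even_p p_ge3.
exact: dist_le_cat (dist_le_arc yc) (dist_le_arc (geodesic3_back_arc g_xc)).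
Qed.

Lemma geodesic4_back_dist4 x y z p :
  geodesic E x z p -> size p = 4 -> dist_le E 2 x y -> dist_le E 4 z y.
Proof.
case: p => [|p1 [|p2 [|p3 [|p4 []]]]] //= g _.
have /= p4_z : last x [:: p1; p2; p3; p4] = z by case: g.
subst z.
have [/and5P[_ e12 e23 e34 _] _ _] := g.
have [g_x3 _] := geodesic_cat (p1 := [:: p1; p2; p3]) g.
have [g_x2 g_24] := geodesic_cat (p1 := [:: p1; p2]) g.
have [_ g_14] := geodesic_cat (p1 := [:: p1]) g.
have e3x := geodesic3_back_arc g_x3; have e41 := geodesic3_back_arc g_14.
case=> -[[_ /= <- _]|w q [/= /andP[xw Eq] wy size_q]].
  apply: dist_le_cat (dist_le_cat (dist_le_arc e41) (dist_le_arc e12)) _.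
  exact: dist_le_cat (dist_le_arc e23) (dist_le_arc e3x).
have w_y : dist_le E 1 w y by exists q.
have w_far : ~ dist_le E 2 w p4.
  by move/(dist_le_cat (dist_le_arc xw))/(geodesic_size_le g).
have w_neq v : dist_le E 2 v p4 -> w != v.
  by move=> vz; apply: contraPneq w_far => ->.
have w_p3 : w != p3 by apply: w_neq; apply: dist_le_widen (dist_le_arc e34).
have p3_w : p3 != w by rewrite eq_sym.
have p2_x : p2 != x by rewrite eq_sym (geodesic_neq g_x2).
have p2_w : p2 != w.
  rewrite eq_sym; apply: w_neq.
  exact: dist_le_cat (dist_le_arc e23) (dist_le_arc e34).
case/orP: (qt_adjacent e23 e3x xw p2_x p2_w p3_w) => [e2w|ew2].
  apply: dist_le_cat (dist_le_cat (dist_le_arc e41) (dist_le_arc e12)) _.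
  exact: dist_le_cat (dist_le_arc e2w) w_y.
have w_p4 : w != p4 by apply: w_neq; exists [::].
have p2_p4 := geodesic_neq g_24 isT.
case/orP: (qt_adjacent ew2 e23 e34 w_p3 w_p4 p2_p4) => [ew4|e4w].
  by case: w_far; apply: dist_le_widen (dist_le_arc ew4).
exact: dist_le_widen (dist_le_cat (dist_le_arc e4w) w_y).
Qed.

Lemma connect_dist2_or_back4 x y z : connect E x z -> dist_le E 2 x y ->
  dist_le E 2 x z \/ dist_le E 4 z y.
Proof.
case/(exists_geodesic (E := E))=> p g xy.
have [le2|gt2] := leqP (size p) 2; first by left; exists p; case: g.
right; have [size4|ne4] := eqVneq (size p) 4.
  exact: geodesic4_back_dist4 g size4 xy.
exact: dist_le_cat (geodesic_back_dist2 g gt2 ne4) xy.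
Qed.

End ThreeQuasiTransitive.

Section Absorption.
Variables (V C : finType) (E : rel V) (HA : rel C) (rho : V -> V -> C) (k : nat).

Definition absorbs (x y : V) : bool :=
  `[< exists p, dpath E x y p /\ Hlength HA rho (x :: p) <= k - 1 >].

Lemma kernel_absorbs_kH_kernel S :
  kernel_in absorbs [set: V] S -> kH_kernel E HA rho k S.
Proof.
case=> _ indS absS; split.
  move=> u v p uS vS uv g; rewrite leqNgt; apply: contraNN (indS u v uS vS uv).
  by move=> short; apply/asboolP; exists p; split=> //; lia.
move=> x xS; have [v vS /asboolP[p []]] := absS x (in_setT x) xS.
by exists v, p.
Qed.

Lemma obstructions_le s : obstructions HA rho s <= (size s).-2.
Proof.
elim: s => [|x s IH] //; case: s IH => [|y [|z t]] //= IH.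
exact: leq_add (leq_b1 _) IH.
Qed.

Lemma absorbs_connect x y : absorbs x y -> connect E x y.
Proof.
by case/asboolP=> p [/and3P[Ep /eqP <- _] _]; apply/connectP; exists p.
Qed.

Hypothesis k_ge5 : 5 <= k.

Lemma dist_le4_absorbs x y : dist_le E 4 x y -> absorbs x y.
Proof.
case=> p [Ep <- size_p]; apply/asboolP.
case: (shortenP Ep) => p' Ep' uniq_p' sub_p'.
exists p'; split; first by rewrite /dpath Ep' uniq_p' eqxx.
have := uniq_leq_size (andP uniq_p').2 sub_p'.
have := obstructions_le (x :: p'); rewrite /Hlength /=; lia.
Qed.

Lemma asym_absorbs_far x y : asym_part absorbs x y -> ~ dist_le E 4 y x.
Proof. by case/andP=> _ /negP yx /dist_le4_absorbs. Qed.

Hypotheses (E_irr : irreflexive E) (E_qt : three_quasi_transitive E).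

Lemma asym_absorbs_path_dist2 x s :
  path (asym_part absorbs) x s -> dist_le E 2 x (last x s).
Proof.
elim/last_ind: s => [|s z IH]; first by exists [::].
rewrite rcons_path last_rcons => /andP[/IH xy yz].
have xz := connect_trans (dist_le_connect xy) (absorbs_connect (andP yz).1).
by case: (connect_dist2_or_back4 E_irr E_qt xz xy) => // /(asym_absorbs_far yz).
Qed.

Lemma asym_absorbs_acyclic x y :
  asym_part absorbs x y -> ~~ connect (asym_part absorbs) y x.
Proof.
move=> xy; apply/negP => /connectP[p yp px].
have : path (asym_part absorbs) x (y :: p) by rewrite /= xy.
rewrite lastI -px rcons_path => /andP[/asym_absorbs_path_dist2 xz zx].
exact: asym_absorbs_far zx (dist_le_widen _ xz).
Qed.

End Absorption.

Unset Implicit Arguments.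

Theorem theorem19 (V C : finType) (E : rel V) (HA : rel C) (rho : V -> V -> C) :
  irreflexive E ->
  three_quasi_transitive E ->
  forall k : nat, 5 <= k -> exists S : {set V}, kH_kernel E HA rho k S.
Proof.
move=> E_irr E_qt k k_ge5.
have acyclic := asym_absorbs_acyclic (HA := HA) (rho := rho) k_ge5 E_irr E_qt.
have [S kerS] := exists_kernel_in acyclic [set: V].
by exists S; apply: kernel_absorbs_kH_kernel.
Qed.
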